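(* Let $\alpha=(\alpha_1,\alpha_2,\alpha_3)\in\mathbb{C}^3$ and $\beta=(\beta_1,\beta_2,\beta_3)\in\mathbb{C}^3$ both satisfy the triangle inequality. Then there exists an automorphism $\varphi\in\operatorname{Aut}(\mathbb{D}^3)$ of the tridisc such that $\varphi(M_\alpha)=M_\beta$.
   Context: $\mathbb{D}$ denotes the open unit disc in $\mathbb{C}$. For $\alpha=(\alpha_1,\alpha_2,\alpha_3)\in\mathbb{C}^3\setminus\{0\}$ let $$M_\alpha=\{(z_1,z_2,z_3)\in\mathbb{D}^3:\ \alpha_1z_1+\alpha_2z_2+\alpha_3z_3=\overline{\alpha_1}z_2z_3+\overline{\alpha_2}z_1z_3+\overline{\alpha_3}z_1z_2\}.$$ A triple $\alpha\in\mathbb{C}^3$ satisfies the triangle inequality if $|\alpha_i|+|\alpha_j|>|\alpha_k|$ for every permutation $(i,j,k)$ of $(1,2,3)$. *)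

From Stdlib Require Import Reals.
From Coquelicot Require Export Coquelicot.
Open Scope R_scope.

Definition C3 := (C * C * C)%type.
Definition c1 (p : C3) : C := fst (fst p).
Definition c2 (p : C3) : C := snd (fst p).
Definition c3 (p : C3) : C := snd p.

Definition inD (z : C) : Prop := Cmod z < 1.
Definition inD3 (p : C3) : Prop := inD (c1 p) /\ inD (c2 p) /\ inD (c3 p).

(* Holomorphy of f : C^3 -> C on the tridisc (Osgood's definition):
   continuous at every point of D^3 and complex differentiable in each
   variable separately (complex derivative in the sense of Coquelicot's
   [ex_derive] over the absolute ring C). *)
Definition holo3 (f : C3 -> C) : Prop :=
  forall p : C3, inD3 p ->
    continuous f p /\
    ex_derive (fun w : C => f (w, c2 p, c3 p)) (c1 p) /\
    ex_derive (fun w : C => f (c1 p, w, c3 p)) (c2 p) /\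
    ex_derive (fun w : C => f (c1 p, c2 p, w)) (c3 p).

Definition holo_self_map (F : C3 -> C3) : Prop :=
  holo3 (fun p => c1 (F p)) /\ holo3 (fun p => c2 (F p)) /\
  holo3 (fun p => c3 (F p)) /\ (forall p, inD3 p -> inD3 (F p)).

Definition is_aut_D3 (F : C3 -> C3) : Prop :=
  holo_self_map F /\
  exists G : C3 -> C3, holo_self_map G /\
    (forall p, inD3 p -> G (F p) = p) /\ (forall p, inD3 p -> F (G p) = p).

Definition Mset (a : C3) (z : C3) : Prop :=
  inD3 z /\
  (c1 a * c1 z + c2 a * c2 z + c3 a * c3 z
   = Cconj (c1 a) * c2 z * c3 z + Cconj (c2 a) * c1 z * c3 z
     + Cconj (c3 a) * c1 z * c2 z)%C.

Definition nonzero3 (a : C3) : Prop := a <> ((RtoC 0, RtoC 0), RtoC 0).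

Definition triangle_ineq (a : C3) : Prop :=
  Cmod (c1 a) + Cmod (c2 a) > Cmod (c3 a) /\
  Cmod (c1 a) + Cmod (c3 a) > Cmod (c2 a) /\
  Cmod (c2 a) + Cmod (c3 a) > Cmod (c1 a).

(* Write [alpha_j = |alpha_j| u_j] with [|u_j| = 1].  In the rotated coordinates
   [z_1 = u_2 u_3 y_1], [z_2 = u_1 u_3 y_2], [z_3 = u_1 u_2 y_3] the equation of [M_alpha]
   gets the real coefficients [r_j = |alpha_j|], and the Cayley transform
   [y_j = (1 - x_j) / (1 + x_j)], which maps the disc onto the right half-plane, turns it
   into [A_1 x_1 + A_2 x_2 + A_3 x_3 = S x_1 x_2 x_3] with [A_1 = r_2 + r_3 - r_1] (and
   cyclically) and [S = r_1 + r_2 + r_3].  The triangle inequality makes every [A_j]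
   positive, so a positive rescaling of each [x_j] normalises the equation to
   [w_1 + w_2 + w_3 = w_1 w_2 w_3].  Each coordinate change is a disc automorphism;
   normalising [M_alpha] and then undoing the normalisation of [M_beta] coordinatewise
   is an automorphism of the tridisc carrying [M_alpha] onto [M_beta]. *)

From Stdlib Require Import Reals Lra.
From Coquelicot Require Import Coquelicot.

Lemma is_derive_C_AbsRing (f : C -> C) (z l : C) :
  @is_derive C_AbsRing C_NormedModule f z l <->
  @is_derive C_AbsRing (AbsRing_NormedModule C_AbsRing) f z l.
Proof.
split; intros [_ Hlim]; (split; [apply is_linear_scal_l|]);
  intros x Hx eps; exact (Hlim x Hx eps).
Qed.

Lemma ex_derive_C_id (z : C) : ex_derive (fun t : C => t) z.
Proof. eexists. apply is_derive_C_AbsRing, is_derive_id. Qed.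

Lemma ex_derive_Cmult (f g : C -> C) (z : C) :
  ex_derive f z -> ex_derive g z -> ex_derive (fun t => f t * g t)%C z.
Proof.
intros [df Hf] [dg Hg]. eexists. apply is_derive_C_AbsRing.
apply (is_derive_mult (K := C_AbsRing) f g).
- apply is_derive_C_AbsRing; exact Hf.
- apply is_derive_C_AbsRing; exact Hg.
- intros; apply Cmult_comm.
Qed.

Lemma ex_derive_Ccomp (f g : C -> C) (z : C) :
  ex_derive f (g z) -> ex_derive g z -> ex_derive (fun t => f (g t)) z.
Proof.
intros Hf [dg Hg]. apply ex_derive_comp; [exact Hf|].
exists dg. apply is_derive_C_AbsRing, Hg.
Qed.

Lemma ex_derive_Cplus (f g : C -> C) (z : C) :
  ex_derive f z -> ex_derive g z -> ex_derive (fun t => f t + g t)%C z.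
Proof. apply (ex_derive_plus (V := C_NormedModule) f g). Qed.

Lemma ex_derive_Cminus (f g : C -> C) (z : C) :
  ex_derive f z -> ex_derive g z -> ex_derive (fun t => f t - g t)%C z.
Proof.
intros Hf Hg. apply (ex_derive_plus (V := C_NormedModule) f (fun t => - g t)%C); auto.
apply (ex_derive_opp (V := C_NormedModule) g); exact Hg.
Qed.

Lemma is_derive_Cinv (x : C) : x <> 0%C -> is_derive Cinv x (- / (x * x))%C.
Proof.
intros Hx. split; [apply is_linear_scal_l|].
intros x0 Hx0.
apply (is_filter_lim_locally_unique (K := C_AbsRing)
         (V := AbsRing_NormedModule C_AbsRing)) in Hx0; subst x0.
intros eps. apply (locally_le_locally_norm (K := C_AbsRing)
                     (V := AbsRing_NormedModule C_AbsRing)).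
pose proof (proj1 (Cmod_gt_0 x) Hx) as HX. set (X := Cmod x) in *.
assert (Hd : 0 < Rmin (X / 2) (eps * (X * X * X) / 2)).
{ apply Rmin_pos; [lra|]. pose proof (cond_pos eps). apply Rdiv_lt_0_compat; [|lra].
  apply Rmult_lt_0_compat; [lra|]. repeat apply Rmult_lt_0_compat; lra. }
exists (mkposreal _ Hd). intros y' Hy. unfold ball_norm in Hy. simpl in Hy.
set (y := (y' : C)) in *. clearbody y. clear y'.
change (Cmod (y - x)%C < Rmin (X / 2) (eps * (X * X * X) / 2)) in Hy.
change (Cmod ((/ y - / x) - (y - x) * (- / (x * x)))%C <= eps * Cmod (y - x)%C).
pose proof (Rmin_l (X / 2) (eps * (X * X * X) / 2)) as Hmin1.
pose proof (Rmin_r (X / 2) (eps * (X * X * X) / 2)) as Hmin2.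
set (h := (y - x)%C) in *. set (H := Cmod h) in *.
assert (HY : X / 2 < Cmod y).
{ assert (Hxy : X <= Cmod y + H).
  { unfold X, H. replace x with (y + - h)%C by (unfold h; ring).
    rewrite <- (Cmod_opp h). apply Cmod_triangle. }
  lra. }
assert (Hy0 : y <> 0%C) by (apply Cmod_gt_0; lra).
replace ((/ y - / x) - h * (- / (x * x)))%C with (h * h / (x * x * y))%C
  by (unfold h; field; auto).
rewrite Cmod_div by (repeat apply Cmult_neq_0; auto).
rewrite !Cmod_mult. fold X H. pose proof (Cmod_ge_0 h) as HH. fold H in HH.
apply Rle_trans with (H * H * 2 / (X * X * X)).
- replace (H * H * 2 / (X * X * X)) with (H * H / (X * X * (X / 2))) by (field; lra).
  unfold Rdiv. apply Rmult_le_compat_l; [nra|].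
  apply Rinv_le_contravar; [repeat apply Rmult_lt_0_compat; lra|]. nra.
- apply Rmult_le_reg_l with (X * X * X); [repeat apply Rmult_lt_0_compat; lra|].
  field_simplify; nra.
Qed.

Lemma ex_derive_Cinv (x : C) : x <> 0%C -> ex_derive Cinv x.
Proof. intros Hx. eexists. apply is_derive_Cinv, Hx. Qed.

(* [ex_derive_continuous] is stated for the norm topology of [C], while
   [holo3] uses the product topology of [C_UniformSpace]. *)
Lemma continuous_of_ex_derive (f : C -> C) (x : C) :
  ex_derive f x -> @continuous C_UniformSpace C_UniformSpace f x.
Proof.
intros Hf. eapply filterlim_filter_le_1; [|exact (ex_derive_continuous f x Hf)].
intros P [eps HP]. assert (He : 0 < eps / 2) by (pose proof (cond_pos eps); lra).
exists (mkposreal _ He). intros y Hy. apply HP.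
pose proof (C_NormedModule_mixin_compat2 x y (mkposreal _ He) Hy) as Hxy. simpl in Hxy.
change (Cmod (minus y x) < eps).
assert (Hs : sqrt 2 < 2).
{ rewrite <- (sqrt_square 2) at 2 by lra. apply sqrt_lt_1; lra. }
apply Rlt_trans with (sqrt 2 * (eps / 2)); [exact Hxy|].
pose proof (cond_pos eps). nra.
Qed.

Definition cay (t : C) : C := ((1 - t) / (1 + t))%C.

Lemma cay_cay (t : C) : (1 + t <> 0)%C -> cay (cay t) = t.
Proof.
intros Ht. unfold cay. field. split; auto.
intros E. apply (f_equal Re) in E. simpl in E. lra.
Qed.

Lemma cay_pair (p q : R) : 0 < (1 + p) * (1 + p) + q * q ->
  cay (p, q) = ((1 - (p * p + q * q)) / ((1 + p) * (1 + p) + q * q),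
                - (2 * q) / ((1 + p) * (1 + p) + q * q)).
Proof.
intros HD. unfold cay, Cdiv, Cminus, Cplus, Cmult, Cinv, Copp. simpl.
f_equal; field; lra.
Qed.

Lemma Cmod_lt_1 (p q : R) : Cmod (p, q) < 1 <-> p * p + q * q < 1.
Proof.
pose proof (Cmod2_alt (p, q)) as E. pose proof (Cmod_ge_0 (p, q)). simpl in E.
split; intros; nra.
Qed.

Lemma Re_cay_gt0 (y : C) : Cmod y < 1 -> 0 < Re (cay y).
Proof.
destruct y as [p q]. intros H. apply Cmod_lt_1 in H.
rewrite cay_pair by nra. simpl. apply Rdiv_lt_0_compat; nra.
Qed.

Lemma Cmod_cay_lt_1 (x : C) : 0 < Re x -> Cmod (cay x) < 1.
Proof.
destruct x as [p q]. simpl. intros Hp.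
assert (HD : 0 < (1 + p) * (1 + p) + q * q) by nra.
rewrite cay_pair by lra. apply Cmod_lt_1.
set (D := (1 + p) * (1 + p) + q * q) in *.
replace ((1 - (p * p + q * q)) / D * ((1 - (p * p + q * q)) / D)
         + - (2 * q) / D * (- (2 * q) / D))
  with (((1 - p) * (1 - p) + q * q) / D) by (unfold D in *; field; lra).
apply Rmult_lt_reg_r with D; auto. unfold Rdiv. rewrite Rmult_assoc, Rinv_l by lra.
unfold D; nra.
Qed.

Lemma add1_neq0_of_Re_gt0 (x : C) : 0 < Re x -> (1 + x <> 0)%C.
Proof. intros H E. apply (f_equal Re) in E. rewrite re_plus in E. simpl in E. lra. Qed.

Lemma add1_neq0_of_disc (y : C) : Cmod y < 1 -> (1 + y <> 0)%C.
Proof.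
intros H E. apply (f_equal Re) in E. rewrite re_plus in E. simpl in E.
pose proof (re_le_Cmod y) as Hre. apply Rabs_le_between in Hre. lra.
Qed.

Lemma ex_derive_cay (t : C) : (1 + t <> 0)%C -> ex_derive cay t.
Proof.
intros Ht. apply (ex_derive_Cmult (fun t => 1 - t)%C (fun t => / (1 + t))%C).
- apply ex_derive_Cminus; [apply ex_derive_const | apply ex_derive_C_id].
- apply (ex_derive_Ccomp Cinv (fun t => 1 + t)%C); [apply ex_derive_Cinv, Ht|].
  apply ex_derive_Cplus; [apply ex_derive_const | apply ex_derive_C_id].
Qed.

Definition half_plane_coord (m : C) (s : R) (z : C) : C := (RtoC s * cay (z / m))%C.

Definition disc_map (m n : C) (c : R) (z : C) : C := (n * cay (half_plane_coord m c z))%C.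

Lemma unit_neq0 (m : C) : Cmod m = 1 -> m <> 0%C.
Proof. intros H E. rewrite E, Cmod_0 in H. lra. Qed.

Lemma Cmod_div_unit (z m : C) : Cmod m = 1 -> Cmod (z / m) = Cmod z.
Proof. intros H. rewrite Cmod_div by (apply unit_neq0, H). rewrite H. field. Qed.

Lemma Re_half_plane_coord_gt0 (m : C) (c : R) (z : C) : Cmod m = 1 -> 0 < c -> Cmod z < 1 ->
  0 < Re (half_plane_coord m c z).
Proof.
intros Hm Hc Hz. unfold half_plane_coord. rewrite re_scal_l.
apply Rmult_lt_0_compat; [exact Hc|]. apply Re_cay_gt0. rewrite Cmod_div_unit; auto.
Qed.

Lemma disc_map_in_D (m n : C) (c : R) (z : C) :
  Cmod m = 1 -> Cmod n = 1 -> 0 < c -> Cmod z < 1 -> Cmod (disc_map m n c z) < 1.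
Proof.
intros Hm Hn Hc Hz. unfold disc_map. rewrite Cmod_mult, Hn, Rmult_1_l.
apply Cmod_cay_lt_1, Re_half_plane_coord_gt0; auto.
Qed.

Lemma ex_derive_disc_map (m n : C) (c : R) (z : C) :
  Cmod m = 1 -> 0 < c -> Cmod z < 1 -> ex_derive (disc_map m n c) z.
Proof.
intros Hm Hc Hz. unfold disc_map, half_plane_coord.
apply (ex_derive_Cmult (fun _ => n)); [apply ex_derive_const|].
apply (ex_derive_Ccomp cay (fun z => RtoC c * cay (z / m))%C).
{ apply ex_derive_cay, add1_neq0_of_Re_gt0, (Re_half_plane_coord_gt0 m c z); auto. }
apply (ex_derive_Cmult (fun _ => RtoC c)); [apply ex_derive_const|].
apply (ex_derive_Ccomp cay (fun z => z / m)%C).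
{ apply ex_derive_cay, add1_neq0_of_disc. rewrite Cmod_div_unit; auto. }
apply (ex_derive_Cmult (fun z => z) (fun _ => / m)%C);
  [apply ex_derive_C_id | apply ex_derive_const].
Qed.

Lemma half_plane_coord_disc_map (m n : C) (s c : R) (z : C) :
  Cmod m = 1 -> Cmod n = 1 -> 0 < c -> Cmod z < 1 ->
  half_plane_coord n s (disc_map m n c z) = half_plane_coord m (s * c) z.
Proof.
intros Hm Hn Hc Hz. unfold disc_map. unfold half_plane_coord at 1.
replace (n * cay (half_plane_coord m c z) / n)%C with (cay (half_plane_coord m c z))
  by (field; apply unit_neq0, Hn).
rewrite cay_cay by (apply add1_neq0_of_Re_gt0, Re_half_plane_coord_gt0; auto).
unfold half_plane_coord. rewrite RtoC_mult. ring.
Qed.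

Lemma disc_map_cancel (m n : C) (c d : R) (z : C) :
  Cmod m = 1 -> Cmod n = 1 -> 0 < c -> c * d = 1 -> Cmod z < 1 ->
  disc_map n m d (disc_map m n c z) = z.
Proof.
intros Hm Hn Hc Hcd Hz. unfold disc_map at 1.
rewrite half_plane_coord_disc_map by auto.
replace (d * c) with 1 by lra. unfold half_plane_coord.
rewrite Cmult_1_l, cay_cay.
- field. apply unit_neq0, Hm.
- apply add1_neq0_of_disc. rewrite Cmod_div_unit; auto.
Qed.

Definition prod_map (f1 f2 f3 : C -> C) (p : C3) : C3 := (f1 (c1 p), f2 (c2 p), f3 (c3 p)).

Definition holo_disc_self_map (f : C -> C) : Prop :=
  forall z, inD z -> ex_derive f z /\ inD (f z).

Lemma holo3_comp_c1 (f : C -> C) : (forall z, inD z -> ex_derive f z) -> holo3 (fun p => f (c1 p)).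
Proof.
intros Hf [[x y] z] [Hx [Hy Hz]]; unfold c1, c2, c3 in *; simpl in *.
repeat split; try apply ex_derive_const; try (apply Hf; assumption).
apply (continuous_comp (fun p : C3 => fst (fst p)) f).
- apply (continuous_comp fst fst); apply continuous_fst.
- apply continuous_of_ex_derive, Hf, Hx.
Qed.

Lemma holo3_comp_c2 (f : C -> C) : (forall z, inD z -> ex_derive f z) -> holo3 (fun p => f (c2 p)).
Proof.
intros Hf [[x y] z] [Hx [Hy Hz]]; unfold c1, c2, c3 in *; simpl in *.
repeat split; try apply ex_derive_const; try (apply Hf; assumption).
apply (continuous_comp (fun p : C3 => snd (fst p)) f).
- apply (continuous_comp fst snd); [apply continuous_fst | apply continuous_snd].
- apply continuous_of_ex_derive, Hf, Hy.
Qed.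

Lemma holo3_comp_c3 (f : C -> C) : (forall z, inD z -> ex_derive f z) -> holo3 (fun p => f (c3 p)).
Proof.
intros Hf [[x y] z] [Hx [Hy Hz]]; unfold c1, c2, c3 in *; simpl in *.
repeat split; try apply ex_derive_const; try (apply Hf; assumption).
apply (continuous_comp snd f); [apply continuous_snd|].
apply continuous_of_ex_derive, Hf, Hz.
Qed.

Lemma holo_self_map_prod_map (f1 f2 f3 : C -> C) :
  holo_disc_self_map f1 -> holo_disc_self_map f2 -> holo_disc_self_map f3 ->
  holo_self_map (prod_map f1 f2 f3).
Proof.
intros H1 H2 H3. split; [|split; [|split]].
- apply holo3_comp_c1. intros; apply H1; auto.
- apply holo3_comp_c2. intros; apply H2; auto.
- apply holo3_comp_c3. intros; apply H3; auto.
- intros p [Hp1 [Hp2 Hp3]]. repeat split; [apply H1 | apply H2 | apply H3]; auto.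
Qed.

Record tri_chart := TriChart {
  rot1 : C; rot2 : C; rot3 : C;
  scale1 : R; scale2 : R; scale3 : R }.

Definition chart_valid (t : tri_chart) : Prop :=
  Cmod (rot1 t) = 1 /\ Cmod (rot2 t) = 1 /\ Cmod (rot3 t) = 1 /\
  0 < scale1 t /\ 0 < scale2 t /\ 0 < scale3 t.

Definition chart_apply (t : tri_chart) (z : C3) : C3 :=
  (half_plane_coord (rot1 t) (scale1 t) (c1 z), half_plane_coord (rot2 t) (scale2 t) (c2 z),
   half_plane_coord (rot3 t) (scale3 t) (c3 z)).

Definition chart_change (t t' : tri_chart) : C3 -> C3 :=
  prod_map (disc_map (rot1 t) (rot1 t') (scale1 t / scale1 t'))
           (disc_map (rot2 t) (rot2 t') (scale2 t / scale2 t'))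
           (disc_map (rot3 t) (rot3 t') (scale3 t / scale3 t')).

Lemma chart_apply_change (t t' : tri_chart) (z : C3) :
  chart_valid t -> chart_valid t' -> inD3 z ->
  chart_apply t' (chart_change t t' z) = chart_apply t z.
Proof.
intros (Hm1 & Hm2 & Hm3 & Hs1 & Hs2 & Hs3) (Hn1 & Hn2 & Hn3 & Ht1 & Ht2 & Ht3)
  (Hz1 & Hz2 & Hz3).
unfold chart_apply, chart_change, prod_map, c1, c2, c3 in *; simpl in *.
rewrite !half_plane_coord_disc_map by (auto; apply Rdiv_lt_0_compat; auto).
repeat f_equal; field; lra.
Qed.

Lemma holo_self_map_chart_change (t t' : tri_chart) : chart_valid t -> chart_valid t' ->
  holo_self_map (chart_change t t').
Proof.
intros (Hm1 & Hm2 & Hm3 & Hs1 & Hs2 & Hs3) (Hn1 & Hn2 & Hn3 & Ht1 & Ht2 & Ht3).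
apply holo_self_map_prod_map; intros z Hz; unfold inD in *;
  (split; [apply ex_derive_disc_map | apply disc_map_in_D]);
  auto; apply Rdiv_lt_0_compat; auto.
Qed.

Lemma chart_change_cancel (t t' : tri_chart) (z : C3) :
  chart_valid t -> chart_valid t' -> inD3 z ->
  chart_change t' t (chart_change t t' z) = z.
Proof.
intros (Hm1 & Hm2 & Hm3 & Hs1 & Hs2 & Hs3) (Hn1 & Hn2 & Hn3 & Ht1 & Ht2 & Ht3)
  (Hz1 & Hz2 & Hz3).
destruct z as [[z1 z2] z3].
unfold chart_change, prod_map, c1, c2, c3 in *; simpl in *.
rewrite !disc_map_cancel; auto; try apply Rdiv_lt_0_compat; auto; field; lra.
Qed.

Lemma is_aut_D3_chart_change (t t' : tri_chart) : chart_valid t -> chart_valid t' ->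
  is_aut_D3 (chart_change t t').
Proof.
intros Ht Ht'. split; [apply holo_self_map_chart_change; auto|].
exists (chart_change t' t).
split; [apply holo_self_map_chart_change; auto|].
split; intros p Hp; apply chart_change_cancel; auto.
Qed.

Definition Meq (a z : C3) : Prop :=
  (c1 a * c1 z + c2 a * c2 z + c3 a * c3 z
   = Cconj (c1 a) * c2 z * c3 z + Cconj (c2 a) * c1 z * c3 z
     + Cconj (c3 a) * c1 z * c2 z)%C.

Definition Req (r1 r2 r3 : R) (y1 y2 y3 : C) : Prop :=
  (r1 * y1 + r2 * y2 + r3 * y3 = r1 * y2 * y3 + r2 * y1 * y3 + r3 * y1 * y2)%C.

Definition cubic_eq (A1 A2 A3 S x1 x2 x3 : C) : Prop :=
  (A1 * x1 + A2 * x2 + A3 * x3 = S * x1 * x2 * x3)%C.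

Definition normal_eq (w : C3) : Prop := cubic_eq 1 1 1 1 (c1 w) (c2 w) (c3 w).

Lemma eq_iff_of_sub_scaled (X Y X' Y' k : C) :
  k <> 0%C -> (X - Y = k * (X' - Y'))%C -> (X = Y <-> X' = Y').
Proof.
intros Hk E. rewrite (Ceq_minus X Y), (Ceq_minus X' Y'), E. split; intros H.
- apply (f_equal (fun t => / k * t)%C) in H.
  rewrite Cmult_0_r in H. rewrite <- H. field. exact Hk.
- rewrite H. apply Cmult_0_r.
Qed.

Lemma Cconj_RtoC (r : R) : Cconj (RtoC r) = RtoC r.
Proof. unfold Cconj, RtoC. simpl. f_equal. ring. Qed.

Lemma Cconj_unit (u : C) : Cmod u = 1 -> Cconj u = (/ u)%C.
Proof.
intros Hu. pose proof (unit_neq0 u Hu) as Hu0.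
assert (E : (u * Cconj u)%C = 1%C) by (rewrite <- Cmod2_conj, Hu; f_equal; ring).
replace (Cconj u) with (/ u * (u * Cconj u))%C by (field; exact Hu0).
rewrite E. apply Cmult_1_r.
Qed.

Lemma Meq_rotate (r1 r2 r3 : R) (u1 u2 u3 y1 y2 y3 : C) :
  Cmod u1 = 1 -> Cmod u2 = 1 -> Cmod u3 = 1 ->
  Meq (r1 * u1, r2 * u2, r3 * u3)%C (u2 * u3 * y1, u1 * u3 * y2, u1 * u2 * y3)%C
  <-> Req r1 r2 r3 y1 y2 y3.
Proof.
intros H1 H2 H3. unfold Meq, Req, c1, c2, c3; simpl.
rewrite !Cmult_conj, !Cconj_RtoC, !Cconj_unit by auto.
pose proof (unit_neq0 u1 H1). pose proof (unit_neq0 u2 H2). pose proof (unit_neq0 u3 H3).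
apply eq_iff_of_sub_scaled with (u1 * u2 * u3)%C.
- repeat apply Cmult_neq_0; auto.
- field. auto.
Qed.

Lemma Req_cay (r1 r2 r3 : R) (x1 x2 x3 : C) :
  (1 + x1 <> 0)%C -> (1 + x2 <> 0)%C -> (1 + x3 <> 0)%C ->
  Req r1 r2 r3 (cay x1) (cay x2) (cay x3) <->
  cubic_eq (RtoC (r2 + r3 - r1)) (RtoC (r1 + r3 - r2)) (RtoC (r1 + r2 - r3))
    (RtoC (r1 + r2 + r3)) x1 x2 x3.
Proof.
intros H1 H2 H3. unfold Req, cubic_eq, cay. rewrite !RtoC_minus, !RtoC_plus.
apply eq_iff_of_sub_scaled with (2 / ((1 + x1) * (1 + x2) * (1 + x3)))%C.
- apply Cmult_neq_0; [intros E; injection E; lra|].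
  intros E. apply (f_equal (Cmult ((1 + x1) * (1 + x2) * (1 + x3)))) in E.
  rewrite Cmult_0_r, Cinv_r in E by (repeat apply Cmult_neq_0; auto).
  injection E. lra.
- field. auto.
Qed.

Lemma cubic_eq_scale (A1 A2 A3 S B1 B2 B3 T k1 k2 k3 k x1 x2 x3 : C) :
  k <> 0%C -> (B1 * k1 = k * A1)%C -> (B2 * k2 = k * A2)%C -> (B3 * k3 = k * A3)%C ->
  (T * k1 * k2 * k3 = k * S)%C ->
  cubic_eq B1 B2 B3 T (k1 * x1) (k2 * x2) (k3 * x3) <-> cubic_eq A1 A2 A3 S x1 x2 x3.
Proof.
intros Hk E1 E2 E3 E4. unfold cubic_eq. apply eq_iff_of_sub_scaled with k; [exact Hk|].
transitivity ((B1 * k1) * x1 + (B2 * k2) * x2 + (B3 * k3) * x3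
              - (T * k1 * k2 * k3) * x1 * x2 * x3)%C; [ring|].
rewrite E1, E2, E3, E4. ring.
Qed.

Definition unit_dir (x : C) : C := (x / RtoC (Cmod x))%C.

Lemma RtoC_neq0 (r : R) : r <> 0 -> RtoC r <> 0%C.
Proof. intros Hr E. injection E. exact Hr. Qed.

Lemma Cmod_unit_dir (x : C) : x <> 0%C -> Cmod (unit_dir x) = 1.
Proof.
intros Hx. pose proof (proj1 (Cmod_gt_0 x) Hx).
unfold unit_dir. rewrite Cmod_div by (apply RtoC_neq0; lra).
rewrite Cmod_R, Rabs_pos_eq by lra. field. lra.
Qed.

Lemma polar_unit_dir (x : C) : x <> 0%C -> x = (RtoC (Cmod x) * unit_dir x)%C.
Proof.
intros Hx. pose proof (proj1 (Cmod_gt_0 x) Hx).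
unfold unit_dir. field. apply RtoC_neq0. lra.
Qed.

Definition normal_factor (A1 A2 A3 S : R) : R := sqrt (S / (A1 * A2 * A3)).

Lemma normal_factor_pos (A1 A2 A3 S : R) :
  0 < A1 -> 0 < A2 -> 0 < A3 -> 0 < S -> 0 < normal_factor A1 A2 A3 S.
Proof.
intros. apply sqrt_lt_R0, Rdiv_lt_0_compat; auto. repeat apply Rmult_lt_0_compat; auto.
Qed.

Lemma cubic_eq_normalize (A1 A2 A3 S : R) (x1 x2 x3 : C) :
  0 < A1 -> 0 < A2 -> 0 < A3 -> 0 < S ->
  let sigma := normal_factor A1 A2 A3 S in
  cubic_eq A1 A2 A3 S x1 x2 x3 <->
  normal_eq (RtoC (sigma * A1) * x1, RtoC (sigma * A2) * x2, RtoC (sigma * A3) * x3)%C.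
Proof.
intros H1 H2 H3 HS sigma.
assert (Hsigma0 : 0 < sigma) by (apply normal_factor_pos; auto).
assert (Hsigma : sigma * sigma = S / (A1 * A2 * A3)).
{ apply sqrt_sqrt, Rlt_le, Rdiv_lt_0_compat; auto. repeat apply Rmult_lt_0_compat; auto. }
assert (E : sigma * A1 * (sigma * A2) * (sigma * A3) = sigma * S).
{ transitivity (sigma * (sigma * sigma) * (A1 * A2 * A3)); [ring|].
  rewrite Hsigma. field. repeat split; lra. }
symmetry. apply cubic_eq_scale with (RtoC sigma); [apply RtoC_neq0; lra | ..];
  rewrite ?Cmult_1_l, ?RtoC_mult; try reflexivity.
rewrite <- !RtoC_mult, E. reflexivity.
Qed.

Definition chart_of (a : C3) : tri_chart :=
  let r1 := Cmod (c1 a) in let r2 := Cmod (c2 a) in let r3 := Cmod (c3 a) in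
  let u1 := unit_dir (c1 a) in let u2 := unit_dir (c2 a) in let u3 := unit_dir (c3 a) in
  let sigma := normal_factor (r2 + r3 - r1) (r1 + r3 - r2) (r1 + r2 - r3) (r1 + r2 + r3) in
  TriChart (u2 * u3) (u1 * u3) (u1 * u2)
           (sigma * (r2 + r3 - r1)) (sigma * (r1 + r3 - r2)) (sigma * (r1 + r2 - r3)).

Lemma chart_of_valid (a : C3) : triangle_ineq a -> chart_valid (chart_of a).
Proof.
destruct a as [[a1 a2] a3]. unfold triangle_ineq, chart_valid, chart_of, c1, c2, c3; simpl.
intros Ta.
assert (Hu : forall x : C, 0 < Cmod x -> Cmod (unit_dir x) = 1)
  by (intros x Hx; apply Cmod_unit_dir, Cmod_gt_0, Hx).
assert (Hsigma : 0 < normal_factor (Cmod a2 + Cmod a3 - Cmod a1) (Cmod a1 + Cmod a3 - Cmod a2)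
                       (Cmod a1 + Cmod a2 - Cmod a3) (Cmod a1 + Cmod a2 + Cmod a3))
  by (apply normal_factor_pos; lra).
repeat split; try (rewrite Cmod_mult, !Hu by lra; ring); apply Rmult_lt_0_compat; lra.
Qed.

Lemma Meq_iff_normal_eq (a z : C3) : triangle_ineq a -> inD3 z ->
  Meq a z <-> normal_eq (chart_apply (chart_of a) z).
Proof.
destruct a as [[a1 a2] a3], z as [[z1 z2] z3].
unfold triangle_ineq, inD3, inD, chart_apply, chart_of, half_plane_coord, c1, c2, c3; simpl.
intros Ta (Hz1 & Hz2 & Hz3).
assert (Ha1 : a1 <> 0%C) by (apply Cmod_gt_0; lra).
assert (Ha2 : a2 <> 0%C) by (apply Cmod_gt_0; lra).
assert (Ha3 : a3 <> 0%C) by (apply Cmod_gt_0; lra).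
pose proof (Cmod_unit_dir a1 Ha1) as Hu1. pose proof (Cmod_unit_dir a2 Ha2) as Hu2.
pose proof (Cmod_unit_dir a3 Ha3) as Hu3.
rewrite (polar_unit_dir a1 Ha1), (polar_unit_dir a2 Ha2), (polar_unit_dir a3 Ha3) at 1.
set (u1 := unit_dir a1) in *. set (u2 := unit_dir a2) in *. set (u3 := unit_dir a3) in *.
clearbody u1 u2 u3.
assert (Hy : forall m z : C, Cmod m = 1 -> Cmod z < 1 -> (1 + z / m <> 0)%C)
  by (intros m z Hm Hz; apply add1_neq0_of_disc; rewrite Cmod_div_unit; auto).
assert (Hx : forall m z : C, Cmod m = 1 -> Cmod z < 1 -> (1 + cay (z / m) <> 0)%C)
  by (intros m z Hm Hz; apply add1_neq0_of_Re_gt0, Re_cay_gt0; rewrite Cmod_div_unit; auto).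
assert (Hm : forall u v : C, Cmod u = 1 -> Cmod v = 1 -> Cmod (u * v)%C = 1)
  by (intros u v Hu Hv; rewrite Cmod_mult, Hu, Hv; ring).
replace (z1, z2, z3) with (u2 * u3 * (z1 / (u2 * u3)), u1 * u3 * (z2 / (u1 * u3)),
                           u1 * u2 * (z3 / (u1 * u2)))%C
  by (pose proof (unit_neq0 u1 Hu1); pose proof (unit_neq0 u2 Hu2);
      pose proof (unit_neq0 u3 Hu3); f_equal; [f_equal|]; field; auto).
rewrite Meq_rotate by auto.
set (x1 := cay (z1 / (u2 * u3))). set (x2 := cay (z2 / (u1 * u3))).
set (x3 := cay (z3 / (u1 * u2))).
rewrite <- (cay_cay (z1 / (u2 * u3))), <- (cay_cay (z2 / (u1 * u3))),
  <- (cay_cay (z3 / (u1 * u2))) by (apply Hy; auto).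
rewrite Req_cay by (apply Hx; auto).
apply cubic_eq_normalize; lra.
Qed.

Lemma Meq_chart_change (a b z : C3) : triangle_ineq a -> triangle_ineq b -> inD3 z ->
  Meq b (chart_change (chart_of a) (chart_of b) z) <-> Meq a z.
Proof.
intros Ha Hb Hz.
pose proof (chart_of_valid a Ha) as Va. pose proof (chart_of_valid b Hb) as Vb.
rewrite (Meq_iff_normal_eq b), (Meq_iff_normal_eq a), chart_apply_change; try tauto.
apply holo_self_map_chart_change; auto.
Qed.

Theorem theorem1 (a b : C3) :
  nonzero3 a -> nonzero3 b -> triangle_ineq a -> triangle_ineq b ->
  exists F : C3 -> C3, is_aut_D3 F /\
    (forall w : C3, Mset b w <-> exists z : C3, Mset a z /\ F z = w).
Proof.
(* [nonzero3] is implied by the triangle inequality. *)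
intros _ _ Ha Hb.
pose proof (chart_of_valid a Ha) as Va. pose proof (chart_of_valid b Hb) as Vb.
pose proof (holo_self_map_chart_change _ _ Va Vb) as HF.
pose proof (holo_self_map_chart_change _ _ Vb Va) as HG.
exists (chart_change (chart_of a) (chart_of b)).
split; [apply is_aut_D3_chart_change; auto|].
intros w. split.
- intros [Hw Ew]. set (z := chart_change (chart_of b) (chart_of a) w).
  assert (Hz : inD3 z) by (apply HG; auto).
  assert (Ez : chart_change (chart_of a) (chart_of b) z = w)
    by (apply chart_change_cancel; auto).
  exists z. split; [split; [exact Hz|] | exact Ez].
  apply (Meq_chart_change a b z); auto. rewrite Ez. exact Ew.
- intros [z [[Hz Ez] <-]]. split; [apply HF; auto|].
  apply (Meq_chart_change a b); auto.
Qed.
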